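(* Let $k\geq 1$ be fixed and $p\neq 0$ real. The inequality $$\frac{2}{k+2}\left( \frac{\sinh x}{x}\right) ^{kp}+\frac{k}{k+2}\left( \frac{\tanh x}{x}\right) ^{p}>1$$ holds for all $x\in (0,\infty)$ if and only if $p>0$ or $p\leq -\dfrac{12}{5(k+2)}$. *)

From Stdlib Require Import Reals.
Open Scope R_scope.

From Stdlib Require Import Reals Lra Lia Psatz.
From Coquelicot Require Import Coquelicot.
Open Scope R_scope.
Set Bullet Behavior "Strict Subproofs".

(* Write [S = sinh x / x], [M = x cosh x - sinh x], [N = sinh x cosh x - x] and let [F] be
   the left-hand side, so that [F -> 1] as [x -> 0+].  The derivative of [F] has the sign of
   [p (p zeta - delta)], where [zeta = (k - 1) ln S + ln cosh x >= 0] and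
   [delta = ln (N / (2 M cosh x)) < 0].  For [p > 0] this is positive.  For
   [p <= -12/(5(k+2))] it is positive as well, by Lazarevic's inequality [cosh x < S^3]
   (giving [zeta >= (k+2)/3 ln cosh x]) and by [cosh x < (N / 2M)^5] (giving
   [delta > -4/5 ln cosh x]).  For [-12/(5(k+2)) < p < 0] the expansions
   [delta ~ -2x^2/5] and [zeta ~ (k+2)x^2/6] make the derivative negative near [0], so
   [F < 1] there. *)

Lemma exp_le_compat x y : x <= y -> exp x <= exp y.
Proof. intros [hxy|<-]; [left; apply exp_increasing|]; lra. Qed.

Lemma ln_le_sub_1 y : 0 < y -> ln y <= y - 1.
Proof. intros hy; pose proof (exp_ineq1_le (ln y)); rewrite exp_ln in * by exact hy; lra. Qed.

Lemma derive_pos_lt (g g' : R -> R) a b : a < b ->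
  (forall c, a <= c <= b -> is_derive g c (g' c)) ->
  (forall c, a < c < b -> 0 < g' c) -> g a < g b.
Proof.
  intros hab hd hpos.
  destruct (MVT_cor2 g g' a b hab) as [c [hmvt hc]].
  - intros c hc; apply is_derive_Reals, hd, hc.
  - specialize (hpos c hc); nra.
Qed.

Lemma nonneg_of_derive_nonneg (g g' : R -> R) :
  (forall x, 0 <= x -> is_derive g x (g' x)) -> g 0 = 0 ->
  (forall x, 0 < x -> 0 <= g' x) -> forall x, 0 <= x -> 0 <= g x.
Proof.
  intros hd h0 hpos x [hx|<-]; [|lra].
  destruct (MVT_cor2 g g' 0 x hx) as [c [hmvt hc]].
  - intros c hc; apply is_derive_Reals, hd; lra.
  - specialize (hpos c (proj1 hc)); nra.
Qed.

Lemma pos_of_derive_pos (g g' : R -> R) :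
  (forall x, 0 <= x -> is_derive g x (g' x)) -> g 0 = 0 ->
  (forall x, 0 < x -> 0 < g' x) -> forall x, 0 < x -> 0 < g x.
Proof.
  intros hd h0 hpos x hx; rewrite <- h0.
  apply (derive_pos_lt g g'); [lra| |]; intros c hc; [apply hd|apply hpos]; lra.
Qed.

Lemma pos_of_iterated_derive_pos (f : nat -> R -> R) (n : nat) :
  (forall i x, (i < n)%nat -> 0 <= x -> is_derive (f i) x (f (S i) x)) ->
  (forall i, (i < n)%nat -> f i 0 = 0) ->
  (forall x, 0 < x -> 0 < f n x) -> forall x, 0 < x -> 0 < f O x.
Proof.
  revert f; induction n as [|n IH]; intros f hd h0 hn; [exact hn|].
  apply (pos_of_derive_pos (f O) (f 1%nat)).
  - intros x hx; apply hd; [lia|exact hx].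
  - apply h0; lia.
  - apply (IH (fun i => f (S i))).
    + intros i x hi hx; apply hd; [lia|exact hx].
    + intros i hi; apply h0; lia.
    + exact hn.
Qed.

Lemma lt_near_0 (h : R -> R) eps : continuous h 0 -> h 0 < eps ->
  exists d, 0 < d /\ forall y, 0 < y < d -> h y < eps.
Proof.
  intros hc hlt.
  apply continuity_pt_filterlim in hc.
  destruct (hc (eps - h 0)) as [d [hd hclose]]; [lra|].
  exists d; split; [exact hd|]; intros y hy.
  assert (hdist : R_dist (h y) (h 0) < eps - h 0).
  { apply hclose; split; [split; [exact I|lra]|].
    simpl; unfold R_dist; rewrite Rminus_0_r, Rabs_right; lra. }
  unfold R_dist in hdist; pose proof (Rle_abs (h y - h 0)); lra.
Qed.

Lemma gt_of_derive_pos_near_0 (g g' h : R -> R) l b :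
  (forall x, 0 < x <= b -> is_derive g x (g' x)) ->
  (forall x, 0 < x <= b -> 0 < g' x) ->
  continuous h 0 -> h 0 = 0 ->
  (forall x, 0 < x <= b -> l - h x <= g x) ->
  forall x, 0 < x <= b -> l < g x.
Proof.
  intros hd hpos hc h0 hlow x hx.
  assert (hincr : forall a c, 0 < a < c -> c <= b -> g a < g c).
  { intros a c hac hcb.
    apply (derive_pos_lt g g'); [lra| |]; intros t ht; [apply hd|apply hpos]; lra. }
  assert (hmid : l <= g (x / 2)).
  { destruct (Rle_or_lt l (g (x / 2))) as [hle|hlt]; [exact hle|exfalso].
    destruct (lt_near_0 h (l - g (x / 2)) hc) as [d [hd0 hsmall]]; [lra|].
    set (y := Rmin (x / 2) d / 2).
    assert (hy : 0 < y < Rmin (x / 2) d).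
    { assert (0 < Rmin (x / 2) d) by (apply Rmin_glb_lt; lra); unfold y; lra. }
    pose proof (Rmin_l (x / 2) d); pose proof (Rmin_r (x / 2) d).
    pose proof (hsmall y ltac:(lra)); pose proof (hlow y ltac:(lra)).
    pose proof (hincr y (x / 2) ltac:(lra) ltac:(lra)); lra. }
  pose proof (hincr (x / 2) x ltac:(lra) ltac:(lra)); lra.
Qed.

(* Identities that need [cosh^2 - sinh^2 = 1] become rational identities in [exp x]. *)
Ltac hyperbolic_field :=
  unfold sinh, cosh; rewrite ?exp_Ropp; field; apply exp_neq_0.

Lemma sinh_pos x : 0 < x -> 0 < sinh x.
Proof. intros hx; rewrite <- sinh_0; apply sinh_lt, hx. Qed.

Lemma cosh_ge_1 x : 1 <= cosh x.
Proof.
  unfold cosh; rewrite exp_Ropp; pose proof (exp_pos x) as he.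
  assert (hsq : exp x + / exp x - 2 = (exp x - 1) ^ 2 / exp x) by (field; lra).
  assert (0 <= (exp x - 1) ^ 2 / exp x) by (apply Rdiv_le_0_compat; [apply pow2_ge_0|lra]).
  lra.
Qed.

Lemma cosh_pos x : 0 < cosh x.
Proof. pose proof (cosh_ge_1 x); lra. Qed.

Lemma id_le_sinh x : 0 <= x -> x <= sinh x.
Proof.
  intros hx.
  enough (0 <= sinh x - x) by lra.
  apply (nonneg_of_derive_nonneg (fun x => sinh x - x) (fun x => cosh x - 1)); auto.
  - intros; auto_derive; auto; field.
  - cbv beta; rewrite sinh_0; field.
  - intros y _; pose proof (cosh_ge_1 y); lra.
Qed.

Definition hyp_M x := x * cosh x - sinh x.
Definition hyp_N x := sinh x * cosh x - x.

Lemma hyp_M_ge x : 0 <= x -> x ^ 3 / 3 <= hyp_M x.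
Proof.
  intros hx; unfold hyp_M.
  enough (0 <= x * cosh x - sinh x - x ^ 3 / 3) by lra.
  apply (nonneg_of_derive_nonneg (fun x => x * cosh x - sinh x - x ^ 3 / 3)
           (fun x => x * (sinh x - x))); auto.
  - intros; auto_derive; auto; field.
  - cbv beta; rewrite sinh_0; field.
  - intros y hy; pose proof (id_le_sinh y ltac:(lra)); nra.
Qed.

Lemma hyp_N_ge x : 0 <= x -> 2 * x ^ 3 / 3 <= hyp_N x.
Proof.
  intros hx; unfold hyp_N.
  enough (0 <= sinh x * cosh x - x - 2 * x ^ 3 / 3) by lra.
  apply (nonneg_of_derive_nonneg (fun x => sinh x * cosh x - x - 2 * x ^ 3 / 3)
           (fun x => 2 * (sinh x * sinh x - x * x))); auto.
  - intros; auto_derive; auto; hyperbolic_field.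
  - cbv beta; rewrite sinh_0; field.
  - intros y hy; pose proof (id_le_sinh y ltac:(lra)); nra.
Qed.

Lemma hyp_M_pos x : 0 < x -> 0 < hyp_M x.
Proof. intros hx; pose proof (hyp_M_ge x ltac:(lra)); pose proof (pow_lt x 3 hx); lra. Qed.

Lemma hyp_N_pos x : 0 < x -> 0 < hyp_N x.
Proof. intros hx; pose proof (hyp_N_ge x ltac:(lra)); pose proof (pow_lt x 3 hx); lra. Qed.

Lemma cosh_sub_1_le x : 0 <= x -> cosh x - 1 <= x ^ 2 * cosh x / 2.
Proof.
  intros hx.
  enough (0 <= x ^ 2 * cosh x / 2 - cosh x + 1) by lra.
  apply (nonneg_of_derive_nonneg (fun x => x ^ 2 * cosh x / 2 - cosh x + 1)
           (fun x => hyp_M x + x ^ 2 * sinh x / 2)); auto.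
  - intros; unfold hyp_M; auto_derive; auto; field.
  - cbv beta; rewrite cosh_0; field.
  - intros y hy; pose proof (hyp_M_pos y hy); pose proof (id_le_sinh y ltac:(lra)).
    assert (0 <= y ^ 2 * sinh y) by (apply Rmult_le_pos; nra); lra.
Qed.

Lemma hyp_M_le x : 0 <= x -> hyp_M x <= x ^ 3 * cosh x / 3.
Proof.
  intros hx.
  enough (0 <= x ^ 3 * cosh x / 3 - hyp_M x) by lra.
  apply (nonneg_of_derive_nonneg (fun x => x ^ 3 * cosh x / 3 - hyp_M x)
           (fun x => x * hyp_M x + x ^ 3 * sinh x / 3)); auto.
  - intros; unfold hyp_M; auto_derive; auto; field.
  - unfold hyp_M; rewrite sinh_0; field.
  - intros y hy; pose proof (hyp_M_pos y hy); pose proof (id_le_sinh y ltac:(lra)).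
    assert (0 <= y ^ 3 * sinh y) by (apply Rmult_le_pos; [apply pow_le|]; lra).
    assert (0 <= y * hyp_M y) by nra; lra.
Qed.

Lemma sinh_sub_id_le x : 0 <= x -> sinh x - x <= x ^ 3 * cosh x / 6.
Proof.
  intros hx.
  enough (0 <= x ^ 3 * cosh x / 6 - sinh x + x) by lra.
  apply (nonneg_of_derive_nonneg (fun x => x ^ 3 * cosh x / 6 - sinh x + x)
           (fun x => (x ^ 2 * cosh x / 2 - cosh x + 1) + x ^ 3 * sinh x / 6)); auto.
  - intros; auto_derive; auto; field.
  - cbv beta; rewrite sinh_0; field.
  - intros y hy; pose proof (cosh_sub_1_le y ltac:(lra)); pose proof (id_le_sinh y ltac:(lra)).
    assert (0 <= y ^ 3 * sinh y) by (apply Rmult_le_pos; [apply pow_le|]; lra); lra.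
Qed.

Lemma two_M_cosh_sub_N_ge x : 0 <= x -> 4 * x ^ 5 / 15 <= 2 * hyp_M x * cosh x - hyp_N x.
Proof.
  intros hx.
  enough (0 <= 2 * hyp_M x * cosh x - hyp_N x - 4 * x ^ 5 / 15) by lra.
  apply (nonneg_of_derive_nonneg (fun x => 2 * hyp_M x * cosh x - hyp_N x - 4 * x ^ 5 / 15)
           (fun x => 4 * (sinh x * hyp_M x - x ^ 4 / 3))); auto.
  - intros; unfold hyp_M, hyp_N; auto_derive; auto; hyperbolic_field.
  - unfold hyp_M, hyp_N; rewrite sinh_0; field.
  - intros y hy; pose proof (hyp_M_ge y ltac:(lra)); pose proof (id_le_sinh y ltac:(lra)).
    assert (y * (y ^ 3 / 3) <= sinh y * hyp_M y).
    { apply Rmult_le_compat; try lra; apply Rmult_le_pos; [apply pow_le|]; lra. }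
    lra.
Qed.

Lemma ln_cosh_nonneg x : 0 <= ln (cosh x).
Proof. rewrite <- ln_1; apply ln_le; [lra|apply cosh_ge_1]. Qed.

Lemma one_le_sinh_div x : 0 < x -> 1 <= sinh x / x.
Proof.
  intros hx; pose proof (id_le_sinh x ltac:(lra)).
  apply (Rmult_le_reg_r x); [lra|]; field_simplify; lra.
Qed.

Lemma ln_sinh_div_nonneg x : 0 < x -> 0 <= ln (sinh x / x).
Proof. intros hx; rewrite <- ln_1; apply ln_le; [lra|apply one_le_sinh_div, hx]. Qed.

Lemma ln_sinh_div_le_ln_cosh x : 0 < x -> ln (sinh x / x) <= ln (cosh x).
Proof.
  intros hx; pose proof (one_le_sinh_div x hx); pose proof (hyp_M_pos x hx).
  apply ln_le; [lra|]; unfold hyp_M in *.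
  apply (Rmult_le_reg_r x); [lra|]; field_simplify; lra.
Qed.

Lemma ln_tanh_div x : 0 < x -> ln (tanh x / x) = ln (sinh x / x) - ln (cosh x).
Proof.
  intros hx; pose proof (one_le_sinh_div x hx); pose proof (cosh_pos x).
  unfold tanh; rewrite <- ln_div by lra; f_equal; field; lra.
Qed.

Lemma ln_cosh_lt_3_ln_sinh_div x : 0 < x -> ln (cosh x) < 3 * ln (sinh x / x).
Proof.
  intros hx.
  enough (0 < 3 * ln (sinh x / x) - ln (cosh x)) by lra.
  apply (gt_of_derive_pos_near_0 (fun x => 3 * ln (sinh x / x) - ln (cosh x))
           (fun x => (2 * hyp_M x * cosh x - hyp_N x) / (x * sinh x * cosh x))
           (fun x => ln (cosh x)) 0 x); try lra.
  - intros y hy; pose proof (sinh_pos y ltac:(lra)); pose proof (cosh_pos y).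
    unfold hyp_M, hyp_N; auto_derive.
    + repeat split; try lra; apply Rdiv_lt_0_compat; lra.
    + field_simplify_eq; [hyperbolic_field|repeat split; lra].
  - intros y hy; pose proof (two_M_cosh_sub_N_ge y ltac:(lra)); pose proof (pow_lt y 5 ltac:(lra)).
    pose proof (sinh_pos y ltac:(lra)); pose proof (cosh_pos y).
    cbv beta; apply Rdiv_lt_0_compat; [lra|].
    apply Rmult_lt_0_compat; [apply Rmult_lt_0_compat|]; lra.
  - apply (ex_derive_continuous (V := R_NormedModule)); auto_derive; apply cosh_pos.
  - rewrite cosh_0, ln_1; reflexivity.
  - intros y hy; pose proof (ln_sinh_div_nonneg y ltac:(lra)); lra.
Qed.

(* The numerator of the derivative of [5 ln (N / 2M) - ln cosh] and its derivatives; the first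
   eight vanish at [0] (the Taylor series starts with a positive multiple of [x ^ 8]). *)
Definition hyp_B (n : nat) (x : R) : R :=
  match n with
  | O => x * sinh (3 * x) - 9/4 * cosh (3 * x) + 9/4 * cosh x + 6 * (x ^ 2 * cosh x)
  | 1 => 3 * x * cosh (3 * x) + sinh (3 * x) - 9/4 * 3 * sinh (3 * x) + 9/4 * sinh x
         + 6 * (x ^ 2 * sinh x + 2 * x * cosh x)
  | 2 => 9 * x * sinh (3 * x) + 6 * cosh (3 * x) - 9/4 * 9 * cosh (3 * x) + 9/4 * cosh x
         + 6 * (x ^ 2 * cosh x + 4 * x * sinh x + 2 * cosh x)
  | 3 => 27 * x * cosh (3 * x) + 27 * sinh (3 * x) - 9/4 * 27 * sinh (3 * x) + 9/4 * sinh x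
         + 6 * (x ^ 2 * sinh x + 6 * x * cosh x + 6 * sinh x)
  | 4 => 81 * x * sinh (3 * x) + 108 * cosh (3 * x) - 9/4 * 81 * cosh (3 * x) + 9/4 * cosh x
         + 6 * (x ^ 2 * cosh x + 8 * x * sinh x + 12 * cosh x)
  | 5 => 243 * x * cosh (3 * x) + 405 * sinh (3 * x) - 9/4 * 243 * sinh (3 * x) + 9/4 * sinh x
         + 6 * (x ^ 2 * sinh x + 10 * x * cosh x + 20 * sinh x)
  | 6 => 729 * x * sinh (3 * x) + 1458 * cosh (3 * x) - 9/4 * 729 * cosh (3 * x) + 9/4 * cosh x
         + 6 * (x ^ 2 * cosh x + 12 * x * sinh x + 30 * cosh x)
  | 7 => 2187 * x * cosh (3 * x) + 5103 * sinh (3 * x) - 9/4 * 2187 * sinh (3 * x)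
         + 9/4 * sinh x + 6 * (x ^ 2 * sinh x + 14 * x * cosh x + 42 * sinh x)
  | _ => 6561 * x * sinh (3 * x) + 17496 * cosh (3 * x) - 9/4 * 6561 * cosh (3 * x)
         + 9/4 * cosh x + 6 * (x ^ 2 * cosh x + 16 * x * sinh x + 56 * cosh x)
  end.

Lemma hyp_B_pos x : 0 < x -> 0 < hyp_B 0 x.
Proof.
  apply (pos_of_iterated_derive_pos hyp_B 8).
  - intros i y hi _; do 8 (destruct i as [|i];
      [lazy beta iota delta [hyp_B]; auto_derive; auto; field|]); lia.
  - intros i hi; do 8 (destruct i as [|i];
      [lazy beta iota delta [hyp_B]; rewrite ?Rmult_0_r, ?sinh_0, ?cosh_0; field|]); lia.
  - intros y hy; cbn.
    pose proof (sinh_pos (3 * y) ltac:(lra)); pose proof (sinh_pos y hy).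
    pose proof (cosh_pos (3 * y)); pose proof (cosh_pos y).
    assert (0 < y * sinh (3 * y)) by (apply Rmult_lt_0_compat; lra).
    assert (0 < y * sinh y) by (apply Rmult_lt_0_compat; lra).
    assert (0 <= y ^ 2 * cosh y) by (apply Rmult_le_pos; [nra|lra]).
    nra.
Qed.

Lemma hyp_B_eq x :
  hyp_B 0 x
  = 4 * x * sinh x * cosh x ^ 2 - 9 * sinh x ^ 2 * cosh x + 6 * x ^ 2 * cosh x - x * sinh x.
Proof.
  cbn; replace (3 * x) with (x + (x + x)) by ring.
  unfold sinh, cosh; rewrite !exp_Ropp, !exp_plus; field; apply exp_neq_0.
Qed.

Lemma ln_cosh_lt_5_ln_N_div_2M x : 0 < x -> ln (cosh x) < 5 * ln (hyp_N x / (2 * hyp_M x)).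
Proof.
  intros hx.
  enough (0 < 5 * ln (hyp_N x / (2 * hyp_M x)) - ln (cosh x)) by lra.
  apply (gt_of_derive_pos_near_0 (fun x => 5 * ln (hyp_N x / (2 * hyp_M x)) - ln (cosh x))
           (fun x => sinh x * hyp_B 0 x / (hyp_N x * hyp_M x * cosh x))
           (fun x => 6 * ln (cosh x)) 0 x); try lra.
  - intros y hy; pose proof (hyp_N_pos y ltac:(lra)); pose proof (hyp_M_pos y ltac:(lra)).
    pose proof (cosh_pos y); rewrite hyp_B_eq; unfold hyp_M, hyp_N in *; auto_derive.
    + repeat split; try lra; apply Rdiv_lt_0_compat; lra.
    + field_simplify_eq; [hyperbolic_field|repeat split; lra].
  - intros y hy; pose proof (hyp_B_pos y ltac:(lra)); pose proof (sinh_pos y ltac:(lra)).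
    pose proof (hyp_N_pos y ltac:(lra)); pose proof (hyp_M_pos y ltac:(lra)).
    pose proof (cosh_pos y).
    cbv beta; apply Rdiv_lt_0_compat; [nra|].
    apply Rmult_lt_0_compat; [apply Rmult_lt_0_compat|]; lra.
  - apply (ex_derive_continuous (V := R_NormedModule)); auto_derive; apply cosh_pos.
  - rewrite cosh_0, ln_1; ring.
  - intros y hy; pose proof (hyp_N_ge y ltac:(lra)); pose proof (hyp_M_le y ltac:(lra)).
    pose proof (hyp_M_pos y ltac:(lra)); pose proof (cosh_pos y).
    pose proof (pow_lt y 3 ltac:(lra)).
    assert (ln (/ cosh y) <= ln (hyp_N y / (2 * hyp_M y))).
    { apply ln_le; [apply Rinv_0_lt_compat; lra|].
      apply (Rmult_le_reg_r (2 * hyp_M y * cosh y)); [nra|]; field_simplify; nra. }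
    rewrite ln_Rinv in * by lra; lra.
Qed.

Definition delta x := ln (hyp_N x / (2 * hyp_M x)) - ln (cosh x).
Definition zeta k x := (k - 1) * ln (sinh x / x) + ln (cosh x).

Definition F k p x :=
  2 / (k + 2) * Rpower (sinh x / x) (k * p) + k / (k + 2) * Rpower (tanh x / x) p.

Definition F'_weight k p x :=
  2 * k / ((k + 2) * x * sinh x) * Rpower (sinh x / x) (k * p) * hyp_M x.

Definition F' k p x := F'_weight k p x * (p * (1 - exp (delta x - p * zeta k x))).

Lemma F'_weight_pos k p x : 0 < k -> 0 < x -> 0 < F'_weight k p x.
Proof.
  intros hk hx; unfold F'_weight, Rpower.
  pose proof (sinh_pos x hx); pose proof (hyp_M_pos x hx).
  pose proof (exp_pos (k * p * ln (sinh x / x))).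
  apply Rmult_lt_0_compat; [apply Rmult_lt_0_compat|]; try lra.
  apply Rdiv_lt_0_compat; [lra|]; apply Rmult_lt_0_compat; [apply Rmult_lt_0_compat|]; lra.
Qed.

Lemma F_derive k p x : 0 < k -> 0 < x -> is_derive (F k p) x (F' k p x).
Proof.
  intros hk hx.
  pose proof (sinh_pos x hx); pose proof (cosh_pos x).
  pose proof (hyp_M_pos x hx); pose proof (hyp_N_pos x hx).
  pose proof (one_le_sinh_div x hx).
  assert (hexp : Rpower (tanh x / x) p = exp (delta x - p * zeta k x)
                 * Rpower (sinh x / x) (k * p) * (2 * hyp_M x * cosh x / hyp_N x)).
  { unfold delta, zeta, Rpower; rewrite ln_tanh_div, <- exp_plus by lra.
    set (u := ln (sinh x / x)); set (L := ln (cosh x)).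
    replace (ln (hyp_N x / (2 * hyp_M x)) - L - p * ((k - 1) * u + L) + k * p * u)
      with (ln (hyp_N x / (2 * hyp_M x)) + - L + p * (u - L)) by ring.
    unfold L.
    rewrite !exp_plus, exp_Ropp, (exp_ln (cosh x)) by lra.
    rewrite exp_ln by (apply Rdiv_lt_0_compat; lra).
    field; repeat split; lra. }
  replace (F' k p x) with (k * p / ((k + 2) * x * sinh x * cosh x)
    * (2 * Rpower (sinh x / x) (k * p) * hyp_M x * cosh x - Rpower (tanh x / x) p * hyp_N x))
    by (rewrite hexp; unfold F', F'_weight; field; repeat split; lra).
  assert (0 < tanh x / x) by (unfold tanh; apply Rdiv_lt_0_compat; [apply Rdiv_lt_0_compat|]; lra).
  unfold F, Rpower, tanh, hyp_M, hyp_N in *; auto_derive.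
  - repeat split; lra.
  - unfold Rdiv; field_simplify_eq; [hyperbolic_field|repeat split; lra].
Qed.

Lemma one_sub_exp_pos a b c : 0 < a * (b - c) -> 0 < a * (1 - exp (c - b)).
Proof.
  intros hab.
  assert (ha : a <> 0) by (intros ->; lra).
  destruct (Rdichotomy _ _ ha) as [hneg|hpos].
  - assert (1 < exp (c - b)) by (rewrite <- exp_0; apply exp_increasing; nra); nra.
  - assert (exp (c - b) < 1) by (rewrite <- exp_0; apply exp_increasing; nra); nra.
Qed.

Lemma F'_pos k p x : 0 < k -> 0 < x -> 0 < p * (p * zeta k x - delta x) -> 0 < F' k p x.
Proof.
  intros hk hx hsign; unfold F'.
  apply Rmult_lt_0_compat; [apply F'_weight_pos; lra|apply one_sub_exp_pos, hsign].
Qed.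

Lemma F'_neg k p x : 0 < k -> 0 < x -> p * (p * zeta k x - delta x) < 0 -> F' k p x < 0.
Proof.
  intros hk hx hsign; unfold F'.
  pose proof (one_sub_exp_pos (- p) (p * zeta k x) (delta x) ltac:(nra)).
  pose proof (F'_weight_pos k p x hk hx); nra.
Qed.

Lemma F_sub_1_abs_le k p x : 1 <= k -> 0 < x ->
  Rabs (F k p x - 1) <= exp (k * Rabs p * ln (cosh x)) - 1.
Proof.
  intros hk hx.
  pose proof (ln_sinh_div_nonneg x hx); pose proof (ln_sinh_div_le_ln_cosh x hx).
  pose proof (Rle_abs p); pose proof (Rabs_maj2 p); pose proof (Rabs_pos p).
  unfold F, Rpower; rewrite ln_tanh_div by exact hx.
  set (u := ln (sinh x / x)) in *; set (L := ln (cosh x)) in *; set (a := k * Rabs p * L).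
  assert (hpL : 0 <= Rabs p * L) by (apply Rmult_le_pos; lra).
  assert (hpu : - (Rabs p * L) <= p * u <= Rabs p * L).
  { assert (0 <= (Rabs p - p) * u) by (apply Rmult_le_pos; lra).
    assert (0 <= (Rabs p + p) * u) by (apply Rmult_le_pos; lra).
    assert (0 <= Rabs p * (L - u)) by (apply Rmult_le_pos; lra).
    nra. }
  assert (hpuL : - (Rabs p * L) <= p * (u - L) <= Rabs p * L).
  { assert (0 <= (Rabs p - p) * (L - u)) by (apply Rmult_le_pos; lra).
    assert (0 <= (Rabs p + p) * (L - u)) by (apply Rmult_le_pos; lra).
    assert (0 <= Rabs p * u) by (apply Rmult_le_pos; lra).
    nra. }
  assert (hka : Rabs p * L <= a) by (unfold a; nra).
  assert (hE1 : exp (- a) <= exp (k * p * u) <= exp a).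
  { assert (k * (p * u) <= k * (Rabs p * L)) by (apply Rmult_le_compat_l; lra).
    assert (k * - (Rabs p * L) <= k * (p * u)) by (apply Rmult_le_compat_l; lra).
    assert (a = k * (Rabs p * L)) by (unfold a; ring).
    split; apply exp_le_compat; nra. }
  assert (hE2 : exp (- a) <= exp (p * (u - L)) <= exp a) by (split; apply exp_le_compat; lra).
  assert (hw : 2 / (k + 2) + k / (k + 2) = 1) by (field; lra).
  assert (0 < 2 / (k + 2)) by (apply Rdiv_lt_0_compat; lra).
  assert (0 < k / (k + 2)) by (apply Rdiv_lt_0_compat; lra).
  assert (hea : 1 - exp (- a) <= exp a - 1) by (pose proof (cosh_ge_1 a); unfold cosh in *; lra).
  apply Rabs_le; split; nra.
Qed.

Lemma F_gt_1_of_F'_pos k p b : 1 <= k ->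
  (forall x, 0 < x <= b -> 0 < F' k p x) -> forall x, 0 < x <= b -> 1 < F k p x.
Proof.
  intros hk hpos.
  apply (gt_of_derive_pos_near_0 (F k p) (F' k p)
           (fun x => exp (k * Rabs p * ln (cosh x)) - 1) 1 b).
  - intros x hx; apply F_derive; lra.
  - exact hpos.
  - apply (ex_derive_continuous (V := R_NormedModule)); auto_derive; apply cosh_pos.
  - rewrite cosh_0, ln_1, Rmult_0_r, exp_0; ring.
  - intros x hx; pose proof (F_sub_1_abs_le k p x hk ltac:(lra)) as habs.
    apply Rabs_le_between in habs; lra.
Qed.

Lemma F_lt_1_of_F'_neg k p b : 1 <= k ->
  (forall x, 0 < x <= b -> F' k p x < 0) -> forall x, 0 < x <= b -> F k p x < 1.
Proof.
  intros hk hneg x hx.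
  enough (-1 < - F k p x) by lra.
  apply (gt_of_derive_pos_near_0 (fun x => - F k p x) (fun x => - F' k p x)
           (fun x => exp (k * Rabs p * ln (cosh x)) - 1) (-1) b); try exact hx.
  - intros y hy; apply (is_derive_opp (F k p)), F_derive; lra.
  - intros y hy; specialize (hneg y hy); lra.
  - apply (ex_derive_continuous (V := R_NormedModule)); auto_derive; apply cosh_pos.
  - rewrite cosh_0, ln_1, Rmult_0_r, exp_0; ring.
  - intros y hy; pose proof (F_sub_1_abs_le k p y hk ltac:(lra)) as habs.
    apply Rabs_le_between in habs; lra.
Qed.

Lemma delta_neg x : 0 < x -> delta x < 0.
Proof.
  intros hx; unfold delta.
  pose proof (two_M_cosh_sub_N_ge x ltac:(lra)); pose proof (pow_lt x 5 hx).
  pose proof (hyp_M_pos x hx); pose proof (hyp_N_pos x hx); pose proof (cosh_pos x).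
  enough (ln (hyp_N x / (2 * hyp_M x)) < ln (cosh x)) by lra.
  apply ln_increasing; [apply Rdiv_lt_0_compat; lra|].
  apply (Rmult_lt_reg_r (2 * hyp_M x)); [lra|]; field_simplify; lra.
Qed.

Lemma delta_gt x : 0 < x -> - (4 / 5) * ln (cosh x) < delta x.
Proof. intros hx; pose proof (ln_cosh_lt_5_ln_N_div_2M x hx); unfold delta; lra. Qed.

Lemma delta_le x : 0 < x -> delta x <= - (2 * x ^ 2 / 5) / cosh x ^ 2.
Proof.
  intros hx.
  pose proof (two_M_cosh_sub_N_ge x ltac:(lra)); pose proof (hyp_M_le x ltac:(lra)).
  pose proof (hyp_M_pos x hx); pose proof (hyp_N_pos x hx); pose proof (cosh_pos x).
  pose proof (pow_lt x 2 hx); pose proof (pow_lt x 3 hx).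
  set (D := 2 * hyp_M x * cosh x).
  assert (hD : 0 < D) by (unfold D; nra).
  assert (hln : delta x <= hyp_N x / D - 1).
  { unfold delta; rewrite <- ln_div; [|apply Rdiv_lt_0_compat; lra|lra].
    replace (hyp_N x / (2 * hyp_M x) / cosh x) with (hyp_N x / D) by (unfold D; field; split; lra).
    apply ln_le_sub_1, Rdiv_lt_0_compat; lra. }
  enough (hyp_N x / D - 1 <= - (2 * x ^ 2 / 5) / cosh x ^ 2) by lra.
  assert (hD3 : D <= 2 * (x ^ 3 * cosh x / 3) * cosh x).
  { unfold D; apply Rmult_le_compat_r; lra. }
  apply (Rmult_le_reg_r (D * cosh x ^ 2)); [nra|].
  field_simplify; [|lra|lra].
  fold D in H.
  assert (0 <= (D - hyp_N x - 4 * x ^ 5 / 15) * cosh x ^ 2) by (apply Rmult_le_pos; nra).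
  assert (0 <= (2 * (x ^ 3 * cosh x / 3) * cosh x - D) * x ^ 2) by (apply Rmult_le_pos; lra).
  nra.
Qed.

Lemma zeta_nonneg k x : 1 <= k -> 0 < x -> 0 <= zeta k x.
Proof.
  intros hk hx; unfold zeta.
  pose proof (ln_sinh_div_nonneg x hx); pose proof (ln_cosh_nonneg x).
  assert (0 <= (k - 1) * ln (sinh x / x)) by (apply Rmult_le_pos; lra); lra.
Qed.

Lemma zeta_ge k x : 1 <= k -> 0 < x -> (k + 2) / 3 * ln (cosh x) <= zeta k x.
Proof.
  intros hk hx; unfold zeta.
  pose proof (ln_cosh_lt_3_ln_sinh_div x hx).
  assert (0 <= (k - 1) * (3 * ln (sinh x / x) - ln (cosh x))) by (apply Rmult_le_pos; lra).
  lra.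
Qed.

Lemma zeta_le k x : 1 <= k -> 0 < x -> zeta k x <= (k + 2) * (x ^ 2 * cosh x) / 6.
Proof.
  intros hk hx; unfold zeta.
  pose proof (sinh_sub_id_le x ltac:(lra)); pose proof (cosh_sub_1_le x ltac:(lra)).
  pose proof (one_le_sinh_div x hx); pose proof (cosh_pos x).
  assert (hu : ln (sinh x / x) <= x ^ 2 * cosh x / 6).
  { eapply Rle_trans; [apply ln_le_sub_1; lra|].
    apply (Rmult_le_reg_r x); [lra|]; field_simplify; lra. }
  pose proof (ln_le_sub_1 (cosh x) ltac:(lra)).
  assert ((k - 1) * ln (sinh x / x) <= (k - 1) * (x ^ 2 * cosh x / 6))
    by (apply Rmult_le_compat_l; lra).
  lra.
Qed.

Lemma F_gt_1_of_pos k p x : 1 <= k -> 0 < p -> 0 < x -> 1 < F k p x.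
Proof.
  intros hk hp hx.
  apply (F_gt_1_of_F'_pos k p x hk); [|lra].
  intros y hy; apply F'_pos; [lra|lra|].
  pose proof (delta_neg y ltac:(lra)); pose proof (zeta_nonneg k y hk ltac:(lra)).
  assert (0 <= p * zeta k y) by (apply Rmult_le_pos; lra).
  apply Rmult_lt_0_compat; lra.
Qed.

Lemma F_gt_1_of_le k p x : 1 <= k -> p <= - (12 / (5 * (k + 2))) -> 0 < x -> 1 < F k p x.
Proof.
  intros hk hp hx.
  assert (hP : 12 / (5 * (k + 2)) * ((k + 2) / 3) = 4 / 5) by (field; lra).
  assert (0 < 12 / (5 * (k + 2))) by (apply Rdiv_lt_0_compat; lra).
  apply (F_gt_1_of_F'_pos k p x hk); [|lra].
  intros y hy; apply F'_pos; [lra|lra|].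
  pose proof (delta_gt y ltac:(lra)); pose proof (zeta_ge k y hk ltac:(lra)).
  pose proof (zeta_nonneg k y hk ltac:(lra)); pose proof (ln_cosh_nonneg y).
  assert (p * zeta k y <= - (12 / (5 * (k + 2))) * zeta k y) by (apply Rmult_le_compat_r; lra).
  assert (12 / (5 * (k + 2)) * ((k + 2) / 3 * ln (cosh y)) <= 12 / (5 * (k + 2)) * zeta k y)
    by (apply Rmult_le_compat_l; lra).
  assert (p * zeta k y < delta y) by nra.
  nra.
Qed.

Lemma F_lt_1_near_0 k p : 1 <= k -> - (12 / (5 * (k + 2))) < p -> p < 0 ->
  exists x, 0 < x /\ F k p x < 1.
Proof.
  intros hk hp hneg.
  set (q := - p).
  assert (hq : 0 < q * (k + 2) < 12 / 5).
  { split; [unfold q; nra|].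
    apply (Rmult_lt_reg_r (/ (k + 2))); [apply Rinv_0_lt_compat; lra|].
    replace (q * (k + 2) * / (k + 2)) with q by (field; lra).
    unfold q; apply Ropp_lt_cancel; rewrite Ropp_involutive.
    replace (- (12 / 5 * / (k + 2))) with (- (12 / (5 * (k + 2)))) by (field; lra); exact hp. }
  destruct (lt_near_0 (fun y => q * (k + 2) * cosh y ^ 3) (12 / 5)) as [d [hd hsmall]].
  - apply (ex_derive_continuous (V := R_NormedModule)); auto_derive; exact I.
  - cbv beta; rewrite cosh_0; lra.
  - exists (d / 2); split; [lra|].
    apply (F_lt_1_of_F'_neg k p (d / 2) hk); [|lra].
    intros y hy; apply F'_neg; [lra|lra|].
    pose proof (hsmall y ltac:(lra)) as hc3; cbv beta in hc3.
    pose proof (delta_le y ltac:(lra)); pose proof (zeta_le k y hk ltac:(lra)).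
    pose proof (cosh_pos y); pose proof (pow_lt y 2 ltac:(lra)).
    assert (- q * ((k + 2) * (y ^ 2 * cosh y) / 6) <= p * zeta k y)
      by (unfold q; rewrite Ropp_involutive; apply Rmult_le_compat_neg_l; lra).
    assert (- (2 * y ^ 2 / 5) / cosh y ^ 2 - - q * ((k + 2) * (y ^ 2 * cosh y) / 6)
            = - y ^ 2 / (30 * cosh y ^ 2) * (12 - 5 * (q * (k + 2) * cosh y ^ 3)))
      by (field; lra).
    assert (0 < y ^ 2 / (30 * cosh y ^ 2)) by (apply Rdiv_lt_0_compat; nra).
    assert (delta y < p * zeta k y) by nra.
    nra.
Qed.

Theorem theorem3p3 (k p : R) (hk : 1 <= k) (hp : p <> 0) :
  (forall x : R, 0 < x ->
     2 / (k + 2) * Rpower (sinh x / x) (k * p)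
     + k / (k + 2) * Rpower (tanh x / x) p > 1)
  <-> (0 < p \/ p <= - (12 / (5 * (k + 2)))).
Proof.
  split.
  - intros hgt.
    destruct (Rlt_or_le 0 p) as [hpos|hnpos]; [left; exact hpos|right].
    apply Rnot_lt_le; intros hlt.
    destruct (F_lt_1_near_0 k p hk hlt ltac:(lra)) as [x [hx hF]].
    specialize (hgt x hx); unfold F in hF; lra.
  - intros [hpos|hle] x hx.
    + exact (F_gt_1_of_pos k p x hk hpos hx).
    + exact (F_gt_1_of_le k p x hk hle hx).
Qed.
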